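(* Let $f,g$ be elements both lying in $A$, or both lying in $B$, such that $f\notin HgH$. Then there exists an integer $t_0>1$ such that for every positive integer $t$ divisible by $t_0$, $f\rho_t\notin H(t)\,(g\rho_t)\,H(t)$.
   Context: Fix integers $m,n>1$ and let $G_{mn}=\langle a,b;\ [a^m,b^n]=1\rangle$. Put $c=a^m$, $d=b^n$, $H=\langle c,d\rangle$, $A=\langle a,H\rangle$, $B=\langle b,H\rangle$. For an integer $t>1$ let $G_{mn}(t)=\langle a,b;\ [a^m,b^n]=1,\ a^{mt}=b^{nt}=1\rangle$, $\rho_t:G_{mn}\to G_{mn}(t)$ the natural homomorphism, and $H(t)=H\rho_t$. *)

(* Finitely presented groups are encoded by words
   in the free group on {a, b}, with equality in the presented group given by
   the equivalence relation generated by free cancellation and insertion/deletion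
   of relators. *)
From Stdlib Require Import List.
From mathcomp Require Import all_boot.
Set Implicit Arguments. Unset Strict Implicit. Unset Printing Implicit Defensive.

Inductive gen := ga | gb.

(* a letter: generator together with an "inverse" flag (true = inverse) *)
Definition letter := (gen * bool)%type.
Definition word := seq letter.

Definition inv_letter (x : letter) : letter := (x.1, ~~ x.2).
Definition inv_word (w : word) : word := rev (map inv_letter w).

Inductive eqw (R : seq word) : word -> word -> Prop :=
| eqw_refl w : eqw R w w
| eqw_sym u v : eqw R u v -> eqw R v u
| eqw_trans u v w : eqw R u v -> eqw R v w -> eqw R u w
| eqw_cancel u v x : eqw R (u ++ x :: inv_letter x :: v) (u ++ v)
| eqw_rel u v r : List.In r R -> eqw R (u ++ r ++ v) (u ++ v).

Definition a_w : word := [:: (ga, false)].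
Definition b_w : word := [:: (gb, false)].
Definition apow (k : nat) : word := nseq k (ga, false).
Definition bpow (k : nat) : word := nseq k (gb, false).
Definition comm_w (x y : word) : word := inv_word x ++ inv_word y ++ x ++ y.

Definition rels (m n : nat) : seq word := [:: comm_w (apow m) (bpow n)].
Definition rels_t (m n t : nat) : seq word :=
  [:: comm_w (apow m) (bpow n); apow (m * t); bpow (n * t)].

Definition gen_word (gens : seq word) (w : word) : Prop :=
  exists l : seq (nat * bool),
    all (fun p => p.1 < size gens) l /\
    w = flatten (map (fun p => let x := nth [::] gens p.1 in
                               if p.2 then inv_word x else x) l).

Definition in_subgroup (R : seq word) (gens : seq word) (f : word) : Prop :=
  exists w, gen_word gens w /\ eqw R f w.

Definition in_dcoset (R : seq word) (gens : seq word) (f g : word) : Prop :=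
  exists h1 h2, gen_word gens h1 /\ gen_word gens h2 /\ eqw R f (h1 ++ g ++ h2).

(* c = a^m, d = b^n, H = <c, d>, A = <a, H>, B = <b, H> *)
Definition Hgens (m n : nat) : seq word := [:: apow m; bpow n].
Definition Agens (m n : nat) : seq word := [:: a_w; apow m; bpow n].
Definition Bgens (m n : nat) : seq word := [:: b_w; apow m; bpow n].

(** Map G_mn(t) onto the free product Z/p * Z/(q t0) of the cyclic groups
    generated by x and y, where (x, p, y, q) = (a, m, b, n) when f, g lie in A and
    (b, n, a, m) when they lie in B.  For t0 | t the relators of G_mn(t) and x^p
    die there, so H(t) maps into <y>, and the reduced form of an element with its
    outer y-syllables removed is an invariant of H(t)-double cosets.  Now f and g
    are products of x^(+-1), x^(+-p) and y^(+-q); once q t0 exceeds twice the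
    total y-exponent of these products, normalising never reduces a y-exponent
    modulo q t0, it only extracts powers of c = x^p from the x-syllables, and
    these commute with the remaining y-syllables, which are powers of d = y^q.
    Equal invariants then put f in H g H already in G_mn. *)

From HB Require Import structures.
From mathcomp Require Import all_boot all_algebra zify.
Set Implicit Arguments. Unset Strict Implicit. Unset Printing Implicit Defensive.
Import GRing.Theory Num.Theory.
Local Open Scope ring_scope.

Definition gen_eqb (g h : gen) : bool :=
  match g, h with ga, ga | gb, gb => true | _, _ => false end.
Lemma gen_eqP : Equality.axiom gen_eqb.
Proof. by case; case; constructor. Qed.
HB.instance Definition _ := hasDecEq.Build gen gen_eqP.

Lemma gen_neq_other (x y g : gen) : x != y -> g != x -> g = y.
Proof. by case: x; case: y; case: g. Qed.

Section WordCongruence.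
Variable R : seq word.
Local Notation "u ~ v" := (eqw R u v) (at level 70).

Lemma eqw_ctx l r u v : u ~ v -> (l ++ u ++ r) ~ (l ++ v ++ r).
Proof.
elim=> [w|u1 v1 _ IH|u1 v1 w1 _ IH1 _ IH2|u1 v1 x|u1 v1 rel Hrel].
- exact: eqw_refl.
- exact: eqw_sym.
- exact: eqw_trans IH2.
- by have := eqw_cancel R (l ++ u1) (v1 ++ r) x; rewrite -!catA.
- by have := eqw_rel (l ++ u1) (v1 ++ r) Hrel; rewrite -!catA.
Qed.

Lemma eqw_cat u u' v v' : u ~ u' -> v ~ v' -> (u ++ v) ~ (u' ++ v').
Proof.
move=> Hu Hv; apply: (@eqw_trans _ _ (u' ++ v)).
  by have := eqw_ctx [::] v Hu.
by have := eqw_ctx u' [::] Hv; rewrite !cats0.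
Qed.

Lemma eqw_catl l u v : u ~ v -> (l ++ u) ~ (l ++ v).
Proof. by move/(eqw_cat (eqw_refl R l)). Qed.

Lemma eqw_catr r u v : u ~ v -> (u ++ r) ~ (v ++ r).
Proof. by move/eqw_cat; apply; apply: eqw_refl. Qed.

Lemma eqw_relator rel : List.In rel R -> rel ~ [::].
Proof. by move=> Hrel; have := eqw_rel [::] [::] Hrel; rewrite cats0. Qed.

Lemma eqw_mulV u : (u ++ inv_word u) ~ [::].
Proof.
elim: u => [|l u IH]; first exact: eqw_refl.
have -> : (l :: u) ++ inv_word (l :: u) = [:: l] ++ (u ++ inv_word u) ++ [:: inv_letter l].
  by rewrite /inv_word /= rev_cons -cats1 -catA.
apply: eqw_trans (eqw_ctx _ _ IH) _.
exact: (eqw_cancel R [::] [::] l).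
Qed.

Lemma eqw_comm_relator u v : List.In (comm_w u v) R -> (u ++ v) ~ (v ++ u).
Proof.
move=> Hr; apply: eqw_sym; apply: (@eqw_trans _ _ ((v ++ u) ++ comm_w u v)).
  by have := eqw_catl (v ++ u) (eqw_sym (eqw_relator Hr)); rewrite cats0.
apply: (@eqw_trans _ _ (v ++ inv_word v ++ u ++ v)).
  by have := eqw_ctx v (inv_word v ++ u ++ v) (eqw_mulV u); rewrite /comm_w -!catA.
by have := eqw_ctx [::] (u ++ v) (eqw_mulV v); rewrite -!catA.
Qed.

End WordCongruence.

Lemma eqw_sub R1 R2 u v : (forall r, List.In r R1 -> List.In r R2) ->
  eqw R1 u v -> eqw R2 u v.
Proof.
move=> HR; elim=> [w|u1 v1 _ IH|u1 v1 w1 _ IH1 _ IH2|u1 v1 x|u1 v1 r Hr].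
- exact: eqw_refl.
- exact: eqw_sym.
- exact: eqw_trans IH2.
- exact: eqw_cancel.
- exact/eqw_rel/HR.
Qed.

Definition gpow (g : gen) (e : int) : word :=
  match e with Posz k => nseq k (g, false) | Negz k => nseq k.+1 (g, true) end.

Lemma gpowN_nat g (k : nat) : gpow g (- k%:Z) = nseq k (g, true).
Proof. by case: k. Qed.

Lemma nseqSr T k (x : T) : nseq k.+1 x = nseq k x ++ [:: x].
Proof. by rewrite -addn1 nseqD. Qed.

Lemma inv_word_nseq k g b : inv_word (nseq k (g, b)) = nseq k (g, ~~ b).
Proof.
rewrite /inv_word map_nseq; elim: k => //= k IH.
by rewrite rev_cons IH -cats1 -nseqSr.
Qed.

Section SignedPowers.
Variable R : seq word.
Local Notation "u ~ v" := (eqw R u v) (at level 70).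

Lemma gpowS g e : (gpow g e ++ [:: (g, false)]) ~ gpow g (e + 1).
Proof.
case: e => [k|k].
  by rewrite (_ : _ + 1 = k.+1%:Z) /= -?nseqSr; [apply: eqw_refl|lia].
case: k => [|k]; first by have := eqw_cancel R [::] [::] (g, true).
rewrite NegzE (_ : _ + 1 = - k.+1%:Z); last by lia.
rewrite gpowN_nat nseqSr -catA.
by have := eqw_cancel R (nseq k.+1 (g, true)) [::] (g, true); rewrite cats0.
Qed.

Lemma gpowSN g e : (gpow g e ++ [:: (g, true)]) ~ gpow g (e - 1).
Proof.
case: e => [[|k]|k]; first exact: eqw_refl.
  rewrite (_ : _ - 1 = k%:Z); last by lia.
  rewrite -[gpow g k.+1]/(nseq k.+1 (g, false)) nseqSr -catA.
  by have := eqw_cancel R (nseq k (g, false)) [::] (g, false); rewrite cats0.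
by rewrite NegzE (_ : _ - 1 = - k.+2%:Z) ?gpowN_nat -?nseqSr; [apply: eqw_refl|lia].
Qed.

Lemma gpowD g e1 e2 : (gpow g e1 ++ gpow g e2) ~ gpow g (e1 + e2).
Proof.
case: e2 => [k|k].
  elim: k => [|k IH]; first by rewrite cats0 addr0; apply: eqw_refl.
  rewrite -[gpow g k.+1]/(nseq k.+1 (g, false)) nseqSr catA.
  rewrite (_ : e1 + k.+1%:Z = (e1 + k) + 1); last by lia.
  exact: eqw_trans (eqw_catr _ IH) (gpowS _ _).
elim: k => [|k IH]; first exact: gpowSN.
rewrite -[gpow g (Negz k.+1)]/(nseq k.+2 (g, true)) nseqSr catA.
rewrite (_ : e1 + Negz k.+1 = (e1 + Negz k) - 1); last by lia.
exact: eqw_trans (eqw_catr _ IH) (gpowSN _ _).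
Qed.

Lemma gpowC g e1 e2 : (gpow g e1 ++ gpow g e2) ~ (gpow g e2 ++ gpow g e1).
Proof. by apply: eqw_trans (gpowD _ _ _) _; rewrite addrC; apply/eqw_sym/gpowD. Qed.

End SignedPowers.

Lemma flatten_nseq_nseq T j k (x : T) : flatten (nseq j (nseq k x)) = nseq (k * j) x.
Proof. by elim: j => [|j IH] /=; rewrite ?muln0 // IH mulnS nseqD. Qed.

Lemma gpowM_flatten g (p : nat) (k : int) :
  exists j b, gpow g (p%:Z * k) = flatten (nseq j (nseq p (g, b))).
Proof.
case: k => j; first by exists j, false; rewrite flatten_nseq_nseq -PoszM.
by exists j.+1, true; rewrite flatten_nseq_nseq NegzE mulrN -PoszM gpowN_nat.
Qed.

Section Commutation.
Variable R : seq word.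
Local Notation "u ~ v" := (eqw R u v) (at level 70).
Local Notation commute u v := ((u ++ v) ~ (v ++ u)).

Lemma eqw_commV u v u' :
  commute u v -> (u ++ u') ~ [::] -> (u' ++ u) ~ [::] -> commute u' v.
Proof.
move=> Huv Hr Hl.
apply: (@eqw_trans _ _ (u' ++ v ++ u ++ u')).
  by apply/eqw_catl/eqw_sym; have := eqw_catl v Hr; rewrite cats0.
apply: (@eqw_trans _ _ (u' ++ u ++ v ++ u')).
  by apply: eqw_catl; rewrite !catA; apply/eqw_catr/eqw_sym.
by rewrite catA; apply: eqw_catr Hl.
Qed.

Lemma eqw_comm_flatten u v j : commute u v -> commute (flatten (nseq j u)) v.
Proof.
move=> H; elim: j => [|j IH] /=; first by rewrite cats0; apply: eqw_refl.
apply: (@eqw_trans _ _ (u ++ v ++ flatten (nseq j u))).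
  by rewrite -catA; apply: eqw_catl.
by rewrite !catA; apply: eqw_catr.
Qed.

Lemma eqw_commVl g (p : nat) v :
  commute (gpow g p) v -> commute (nseq p (g, true)) v.
Proof.
move=> H; apply: (eqw_commV H).
  by have := eqw_mulV R (nseq p (g, false)); rewrite inv_word_nseq.
by have := eqw_mulV R (nseq p (g, true)); rewrite inv_word_nseq.
Qed.

Variables (x y : gen) (p q : nat).
Hypothesis hcomm : commute (gpow x p) (gpow y q).

Lemma nseq_comm b1 b2 : commute (nseq p (x, b1)) (nseq q (y, b2)).
Proof.
have Hx b : commute (nseq p (x, b)) (gpow y q) by case: b; [apply: eqw_commVl|].
case: b2; last exact: Hx.
by apply/eqw_sym/eqw_commVl/eqw_sym.
Qed.

Lemma gpowM_comm k l : commute (gpow x (p%:Z * k)) (gpow y (q%:Z * l)).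
Proof.
have [j1 [b1 ->]] := gpowM_flatten x p k; have [j2 [b2 ->]] := gpowM_flatten y q l.
apply/eqw_comm_flatten/eqw_sym/eqw_comm_flatten/eqw_sym; exact: nseq_comm.
Qed.

End Commutation.

Definition syl := (gen * int)%type.

Definition syl_word (l : seq syl) : word := flatten (map (fun z => gpow z.1 z.2) l).
Definition state_word (s : seq syl) : word := syl_word (rev s).

Lemma syl_word_cons z l : syl_word (z :: l) = gpow z.1 z.2 ++ syl_word l.
Proof. by []. Qed.

Lemma state_word_cons z s : state_word (z :: s) = state_word s ++ gpow z.1 z.2.
Proof. by rewrite /state_word /syl_word rev_cons map_rcons flatten_rcons. Qed.

Section FreeProductModel.
Variable M : gen -> int.
Hypothesis M_gt0 : forall g, 0 < M g.

Definition symmod g (e : int) : int :=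
  let r := (e %% M g)%Z in if 2 * r <= M g then r else r - M g.

Lemma symmod_mod g e : (symmod g e %% M g)%Z = (e %% M g)%Z.
Proof.
rewrite /symmod; case: ifP => _; first by rewrite modz_mod.
by rewrite (_ : _ - M g = (-1) * M g + (e %% M g)%Z) ?modzMDl ?modz_mod //; lia.
Qed.

Lemma symmod_eqmod g a b : (a %% M g)%Z = (b %% M g)%Z -> symmod g a = symmod g b.
Proof. by rewrite /symmod => ->. Qed.

Lemma symmodDl g a b : symmod g (symmod g a + b) = symmod g (a + b).
Proof. by apply: symmod_eqmod; rewrite -modzDml symmod_mod modzDml. Qed.

Lemma symmod_id g a : symmod g (symmod g a) = symmod g a.
Proof. by have := symmodDl g a 0; rewrite !addr0. Qed.

Lemma symmod_eq0 g a : (symmod g a == 0) = (M g %| a)%Z.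
Proof.
have := M_gt0 g; rewrite /symmod; case: ifP => Hr HM; apply/eqP/dvdz_mod0P => //.
all: by move=> H; lia.
Qed.

Lemma symmodP g a : exists k, a = symmod g a + M g * k.
Proof.
exists ((a - symmod g a) %/ M g)%Z; rewrite mulrC.
have /divzK -> : (M g %| a - symmod g a)%Z.
  by apply/dvdz_mod0P; rewrite -modzDmr -modzNm symmod_mod modzNm modzDmr subrr mod0z.
lia.
Qed.

Lemma symmod_small g a : - M g < 2 * a <= M g -> symmod g a = a.
Proof.
move=> Ha; have := M_gt0 g; rewrite /symmod; case: (lerP 0 a) => Ha0 HM.
  by rewrite modz_small ?ifT //; lia.
rewrite (_ : (a %% M g)%Z = a + M g); first by rewrite ifF; lia.
by rewrite -(modzDr a (M g)) modz_small //; lia.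
Qed.

(* A state is a reduced word of the free product Z/M(ga) * Z/M(gb), listed
   from its last syllable to its first; exponents are nonzero symmetric residues. *)
Definition push g e (s : seq syl) : seq syl :=
  if symmod g e == 0 then s else (g, symmod g e) :: s.

Definition rmul (s : seq syl) (z : syl) : seq syl :=
  if s is (g, e) :: s' then
    if g == z.1 then push z.1 (e + z.2) s' else push z.1 z.2 s
  else push z.1 z.2 [::].

Definition syl_ok (z : syl) := (symmod z.1 z.2 == z.2) && (z.2 != 0).
Definition reduced (s : seq syl) := all syl_ok s && sorted (fun z z' => z.1 != z'.1) s.
Definition head_not g (s : seq syl) := if s is z :: _ then z.1 != g else true.

Lemma pushE g e s : push g e s = push g e [::] ++ s.
Proof. by rewrite /push; case: ifP. Qed.

Lemma state_word_push g e s :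
  symmod g e = e -> state_word (push g e s) = state_word s ++ gpow g e.
Proof.
rewrite /push => ->; case: eqP => [->|_]; first by rewrite cats0.
by rewrite state_word_cons.
Qed.

Lemma push_eqmod g a b s : symmod g a = symmod g b -> push g a s = push g b s.
Proof. by rewrite /push => ->. Qed.

Lemma rmul_cons z s y : rmul (z :: s) y = rmul [:: z] y ++ s.
Proof.
case: z => g e /=; case: ifP => _; first by rewrite pushE.
by rewrite pushE [push _ _ [:: _]]pushE -catA.
Qed.

Lemma rmul_head_not s g e : head_not g s -> rmul s (g, e) = push g e s.
Proof. by case: s => [|[g' e'] s] //= /negbTE ->. Qed.

Lemma reduced_cons z s : reduced (z :: s) = [&& syl_ok z, head_not z.1 s & reduced s].
Proof.
rewrite /reduced /=; case: s => [|z' s] /=; first by rewrite !andbT.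
rewrite eq_sym; case: (syl_ok z) => //=; case: (z'.1 != z.1); rewrite ?andbF //.
Qed.

Lemma reduced_push g e s : reduced s -> head_not g s -> reduced (push g e s).
Proof.
rewrite /push; case: ifP => // /negbT He Hs Hh.
by rewrite reduced_cons Hh Hs /syl_ok /= symmod_id eqxx He.
Qed.

Lemma reduced_rmul s z : reduced s -> reduced (rmul s z).
Proof.
case: z => g e; case: s => [|[g' e'] s] /=; first by move=> _; apply: reduced_push.
case: ifP => [/eqP <-|/negbT Hg] Hs; last exact: reduced_push.
by move: Hs; rewrite reduced_cons => /and3P [_ Hh Hs]; apply: reduced_push.
Qed.

Lemma rmul_push s g e1 e2 : head_not g s -> rmul (push g e1 s) (g, e2) = push g (e1 + e2) s.
Proof.
move=> Hh; rewrite {1}/push; case: ifP => [He|_].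
  by rewrite rmul_head_not //; apply: push_eqmod; rewrite -symmodDl (eqP He) add0r.
by rewrite /= eqxx; apply: push_eqmod; rewrite symmodDl.
Qed.

Lemma rmulD s g e1 e2 : reduced s -> rmul (rmul s (g, e1)) (g, e2) = rmul s (g, e1 + e2).
Proof.
case: s => [|[g' e'] s] Hs; first by rewrite /= rmul_push.
rewrite /=; case: ifP => [/eqP Eg|/negbT Hg]; last by rewrite rmul_push.
by move: Hs; rewrite Eg reduced_cons => /and3P [_ Hh _]; rewrite rmul_push // addrA.
Qed.

Lemma rmul_dvd s g e : reduced s -> (M g %| e)%Z -> rmul s (g, e) = s.
Proof.
move=> Hs He; have He0 : symmod g e == 0 by rewrite symmod_eq0.
case: s Hs => [|[g' e'] s] Hs; first by rewrite /= /push He0.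
rewrite /=; case: ifP => [/eqP Eg|_]; last by rewrite /push He0.
move: Hs; rewrite Eg reduced_cons => /and3P [/andP [/eqP He' /negbTE Hne] _ _].
rewrite /push (@symmod_eqmod _ _ e'); last by rewrite -modzDmr (dvdz_mod0P He) addr0.
by rewrite He' Hne.
Qed.

Lemma rmul0 s g : reduced s -> rmul s (g, 0) = s.
Proof. by move=> Hs; apply: rmul_dvd => //; apply: dvdz0. Qed.

Definition lmul (s : seq syl) (z : syl) : seq syl := rev (rmul (rev s) z).

Lemma rev_push_nil g e : rev (push g e [::]) = push g e [::].
Proof. by rewrite /push; case: ifP. Qed.

Lemma rmul_push_nil g1 e1 g2 e2 : g1 != g2 ->
  rmul (push g1 e1 [::]) (g2, e2) = push g2 e2 [::] ++ push g1 e1 [::].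
Proof. by move=> Hg; rewrite rmul_head_not -?pushE // /push; case: ifP. Qed.

Lemma rmul_lmul_nil z1 z2 : rmul (lmul [::] z1) z2 = lmul (rmul [::] z2) z1.
Proof.
case: z1 z2 => g1 e1 [g2 e2]; rewrite /lmul /= !rev_push_nil.
have [<-|Hg] := eqVneq g1 g2; first by rewrite !rmul_push // rev_push_nil addrC.
by rewrite !rmul_push_nil ?rev_cat ?rev_push_nil // eq_sym.
Qed.

Lemma rmul_lmul_syl z z1 z2 : rmul (lmul [:: z] z1) z2 = lmul (rmul [:: z] z2) z1.
Proof.
case: z z1 z2 => g e [g1 e1] [g2 e2]; rewrite /lmul /=.
have [<-|H1] := eqVneq g g1; have [<-|H2] := eqVneq g g2.
- by rewrite !rev_push_nil !rmul_push // rev_push_nil addrAC.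
- rewrite rev_push_nil rmul_push_nil // [push g2 _ [:: _]]pushE rev_cat /= eqxx.
  by rewrite rev_push_nil (pushE g _ (push _ _ _)) rev_cat !rev_push_nil.
- rewrite rev_push_nil [push g1 _ [:: _]]pushE rev_cat /= eqxx.
  rewrite rmul_push_nil //.
  by rewrite rev_push_nil (pushE g _ (push _ _ _)) rev_cat !rev_push_nil.
- have E12 : g1 = g2 by apply: (gen_neq_other H2); rewrite eq_sym.
  rewrite -E12 !(pushE _ _ [:: _]) !rev_cat /= (negbTE H1) !rev_push_nil.
  by rewrite !(pushE g1 _ (_ :: _)) rev_cat rev_cons !rev_push_nil -cats1 -catA.
Qed.

Lemma rmul_lmul_long z s z' z1 z2 :
  rmul (lmul (z :: rcons s z') z1) z2 = lmul (rmul (z :: rcons s z') z2) z1.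
Proof.
rewrite /lmul rev_cons rev_rcons rcons_cons rmul_cons rev_cat rev_rcons revK cat_cons rmul_cons.
rewrite [rmul (z :: rcons _ _) _]rmul_cons rev_cat rev_rcons cat_cons.
by rewrite [rmul (z' :: _ ++ _) _]rmul_cons !rev_cat !revK catA.
Qed.

Lemma rmul_lmul s z1 z2 : rmul (lmul s z1) z2 = lmul (rmul s z2) z1.
Proof.
case: s => [|z s]; first exact: rmul_lmul_nil.
by case/lastP: s => [|s z']; [apply: rmul_lmul_syl | apply: rmul_lmul_long].
Qed.

Definition act (s : seq syl) (l : letter) : seq syl := rmul s (l.1, if l.2 then -1 else 1).
Definition run : seq syl -> word -> seq syl := foldl act.

Lemma run_cat s u v : run s (u ++ v) = run (run s u) v.
Proof. exact: foldl_cat. Qed.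

Lemma reduced_run s w : reduced s -> reduced (run s w).
Proof. by elim: w s => //= l w IH s Hs; apply/IH/reduced_rmul. Qed.

Lemma run_nseq s k g b : reduced s ->
  run s (nseq k (g, b)) = rmul s (g, if b then - k%:Z else k%:Z).
Proof.
elim: k s => [|k IH] s Hs /=; first by case: b; rewrite ?oppr0 rmul0.
rewrite IH ?reduced_rmul // /act /= rmulD //; congr (rmul _ (_, _)); case: (b); lia.
Qed.

Lemma run_gpow s g e : reduced s -> run s (gpow g e) = rmul s (g, e).
Proof.
case: e => k Hs; first by rewrite run_nseq.
by rewrite -[gpow g _]/(nseq k.+1 (g, true)) run_nseq // NegzE.
Qed.

Lemma act_inv s l : reduced s -> act (act s l) (inv_letter l) = s.
Proof.
move=> Hs; case: l => g b; rewrite /act /= rmulD //.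
by rewrite (_ : _ + _ = 0) ?rmul0 //; case: b.
Qed.

Lemma run_eqw R :
  (forall r, List.In r R -> forall s, reduced s -> run s r = s) ->
  forall u v, eqw R u v -> forall s, reduced s -> run s u = run s v.
Proof.
move=> HR u v; elim=> [w|u1 v1 _ IH|u1 v1 w1 _ IH1 _ IH2|u1 v1 l|u1 v1 r Hr] s Hs //.
- by rewrite IH.
- by rewrite IH1 // IH2.
- by rewrite !run_cat /= act_inv // reduced_run.
- by rewrite !run_cat [run _ r]HR // reduced_run.
Qed.

Lemma run_lmul s z w : reduced s -> run (lmul s z) w = lmul (run s w) z.
Proof. by elim: w s => //= l w IH s Hs; rewrite /act rmul_lmul IH ?reduced_rmul. Qed.

Definition strip (y : gen) (s : seq syl) : seq syl :=
  if s is z :: s' then (if z.1 == y then s' else s) else s.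

(* Stripping the y-syllables at both ends: an invariant of the double coset <y> s <y>. *)
Definition dcore (y : gen) (s : seq syl) : seq syl := strip y (rev (strip y s)).

Lemma dcore_long y z s z' : dcore y (z :: rcons s z') =
  (if z'.1 == y then [::] else [:: z']) ++ rev s ++ (if z.1 == y then [::] else [:: z]).
Proof.
rewrite /dcore /=; case: ifP => _; rewrite ?rev_cons rev_rcons /=;
  by case: ifP => _; rewrite ?cats0 ?cats1.
Qed.

Lemma dcore_rev y s : dcore y (rev s) = rev (dcore y s).
Proof.
case: s => [|z s] //; case/lastP: s => [|s z'].
  by rewrite /dcore /=; case: ifP => //= H; rewrite H.
rewrite rev_cons rev_rcons rcons_cons !dcore_long revK !rev_cat !catA.
by rewrite revK; do 2 case: ifP => _ /=.
Qed.

Lemma strip_rmul y s e : reduced s -> strip y (rmul s (y, e)) = strip y s.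
Proof.
case: s => [|[g' e'] s] /=; first by rewrite /push; case: ifP => //= _; rewrite ?eqxx.
case: ifP => [/eqP <- | /negbT Hg] Hs; last first.
  by rewrite /push; case: ifP => _ //=; rewrite ?eqxx ?(negbTE Hg).
move: Hs; rewrite reduced_cons => /and3P [_ Hh _].
rewrite /push; case: ifP => _ /=; last by rewrite eqxx.
by case: s Hh => // [[g2 e2] s] /= /negbTE ->.
Qed.

Lemma dcore_rmul y s e : reduced s -> dcore y (rmul s (y, e)) = dcore y s.
Proof. by move=> Hs; rewrite /dcore strip_rmul. Qed.

Lemma reduced_rev s : reduced (rev s) = reduced s.
Proof.
rewrite /reduced all_rev rev_sorted; congr (_ && _).
by case: s => //= z s; apply: eq_path => z1 z2; rewrite eq_sym.
Qed.

Lemma dcore_lmul y s e : reduced s -> dcore y (lmul s (y, e)) = dcore y s.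
Proof.
by move=> Hs; rewrite /lmul dcore_rev dcore_rmul ?reduced_rev // dcore_rev revK.
Qed.

Section SubgroupWords.
Variables (y : gen) (gens : seq word).
Hypothesis gens_in_model : forall w, w \in gens ->
  exists g k, w = nseq k (g, false) /\ (g = y \/ (M g %| k%:Z)%Z).

Lemma run_gen_word s h : reduced s -> gen_word gens h -> exists e, run s h = rmul s (y, e).
Proof.
move=> Hs [l [Hl ->]]; elim: l s Hs Hl => [|[i b] l IH] s Hs /=.
  by move=> _; exists 0; rewrite rmul0.
case/andP=> Hi Hl; rewrite run_cat.
have [g [k [Hn Hg]]] := gens_in_model (mem_nth [::] Hi).
have [e0 He0] : exists e0,
    run s (if b then inv_word (nth [::] gens i) else nth [::] gens i) = rmul s (y, e0).
  rewrite Hn; case: b; rewrite ?inv_word_nseq run_nseq //=; case: Hg => [->|Hd].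
  - by exists (- k%:Z).
  - by exists 0; rewrite rmul0 // rmul_dvd // rpredN.
  - by exists k%:Z.
  - by exists 0; rewrite rmul0 // rmul_dvd.
have [e He] := IH _ (reduced_rmul (y, e0) Hs) Hl.
by exists (e0 + e); rewrite He0 He rmulD.
Qed.

Lemma dcore_dcoset R f g h1 h2 :
  (forall r, List.In r R -> forall s, reduced s -> run s r = s) ->
  gen_word gens h1 -> gen_word gens h2 ->
  eqw R f (h1 ++ g ++ h2) -> dcore y (run [::] f) = dcore y (run [::] g).
Proof.
move=> HR H1 H2 Hf; rewrite (run_eqw HR Hf) // !run_cat.
have [e1 ->] := run_gen_word (isT : reduced [::]) H1.
have Hg : reduced (run (rmul [::] (y, e1)) g) by apply/reduced_run/reduced_rmul.
have [e2 ->] := run_gen_word Hg H2.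
have lmul_nil : rmul [::] (y, e1) = lmul [::] (y, e1) by rewrite /lmul /= rev_push_nil.
by rewrite dcore_rmul // lmul_nil run_lmul // dcore_lmul // reduced_run.
Qed.

End SubgroupWords.

Lemma run_syl_word s l : reduced s -> run s (syl_word l) = foldl rmul s l.
Proof.
by elim: l s => //= z l IH s Hs; rewrite run_cat run_gpow // IH // reduced_rmul.
Qed.

Lemma run_rels_t m n t :
  (M ga %| m%:Z)%Z \/ (M gb %| n%:Z)%Z ->
  (M ga %| (m * t)%N%:Z)%Z -> (M gb %| (n * t)%N%:Z)%Z ->
  forall r, List.In r (rels_t m n t) -> forall s, reduced s -> run s r = s.
Proof.
move=> Hc Ha Hb r Hr s Hs.
case: Hr => [<-|[<-|[<-|[]]]]; rewrite /apow /bpow ?run_nseq ?rmul_dvd //.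
rewrite /comm_w !inv_word_nseq !run_cat !run_nseq ?reduced_rmul //=.
case: Hc => H.
  by rewrite (rmul_dvd Hs) ?rpredN // (rmul_dvd (reduced_rmul _ Hs) H) rmulD // addNr rmul0.
by rewrite (rmul_dvd (reduced_rmul _ Hs)) ?rpredN // rmulD // addNr rmul0 // rmul_dvd.
Qed.

End FreeProductModel.

Section Lifting.
Variables (R : seq word) (x y : gen) (p q t0 : nat).
Hypotheses (hxy : x != y) (hp : (0 < p)%N) (hq : (0 < q)%N) (ht0 : (0 < t0)%N).
Hypothesis hcomm : eqw R (gpow x p ++ gpow y q) (gpow y q ++ gpow x p).
Local Notation "u ~ v" := (eqw R u v) (at level 70).

(* In this model x^p, a generator of H, dies, while y keeps order q t0. *)
Definition morder (g : gen) : int := if g == x then p%:Z else (q * t0)%:Z.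

Lemma morder_gt0 g : 0 < morder g.
Proof. by rewrite /morder; case: ifP; rewrite ltz_nat ?muln_gt0 ?hp ?hq ?ht0. Qed.

Local Notation symmod := (symmod morder).
Local Notation push := (push morder).
Local Notation rmul := (rmul morder).
Local Notation reduced := (reduced morder).
Local Notation cpow k := (gpow x (p%:Z * k)).

Definition ydiv (s : seq syl) := all (fun z => (z.1 == y) ==> (q%:Z %| z.2)%Z) s.
Fixpoint ymass (s : seq syl) : nat :=
  if s is z :: s' then ((if z.1 == y then `|z.2|%N else 0) + ymass s')%N else 0%N.

Lemma cpow_comm k s : ydiv s -> (cpow k ++ state_word s) ~ (state_word s ++ cpow k).
Proof.
elim: s => [|[g e] s IH] /=; first by rewrite /state_word /= cats0 => _; apply: eqw_refl.
case/andP=> Hz Hs; rewrite state_word_cons.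
apply: (@eqw_trans _ _ (state_word s ++ cpow k ++ gpow g e)).
  by rewrite !catA; apply/eqw_catr/IH.
rewrite -catA; apply: eqw_catl.
have [->|Hg] := eqVneq g x; first exact: gpowC.
move: Hz; rewrite (gen_neq_other hxy Hg) eqxx => /dvdzP [l ->].
by rewrite [l * _]mulrC; apply: gpowM_comm.
Qed.

Lemma ydiv_push_x e s : ydiv s -> ydiv (push x e s).
Proof. by rewrite /push; case: ifP => //= _ ->; rewrite (negbTE hxy). Qed.

Lemma ymass_push_x e s : ymass (push x e s) = ymass s.
Proof. by rewrite /push; case: ifP => //= _; rewrite (negbTE hxy). Qed.

Lemma push_x_lift e s : ydiv s ->
  exists k, (state_word s ++ gpow x e) ~ (cpow k ++ state_word (push x e s)).
Proof.
move=> Hs; have [k Hk] := symmodP morder x e; exists k.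
have morder_x : morder x = p%:Z by rewrite /morder eqxx.
rewrite (push_eqmod _ (esym (symmod_id morder x e))).
rewrite state_word_push ?symmod_id // catA.
apply: (@eqw_trans _ _ ((state_word s ++ cpow k) ++ gpow x (symmod x e))); last first.
  by apply/eqw_catr/eqw_sym/cpow_comm.
rewrite -!catA; apply/eqw_catl/eqw_sym; apply: eqw_trans (gpowD _ _ _ _) _.
by rewrite -morder_x addrC -Hk; apply: eqw_refl.
Qed.

Lemma rmul_x_lift s e : reduced s -> ydiv s -> exists k,
  [/\ (state_word s ++ gpow x e) ~ (cpow k ++ state_word (rmul s (x, e))),
      ydiv (rmul s (x, e)) & (ymass (rmul s (x, e)) <= ymass s)%N].
Proof.
case: s => [|[g' e'] s] Hs Hy /=.
  by have [k Hk] := push_x_lift e Hy; exists k; rewrite ydiv_push_x ?ymass_push_x.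
have [Eg|Hg] := eqVneq g' x; last first.
  have [k Hk] := push_x_lift e Hy; exists k.
  by rewrite ydiv_push_x ?ymass_push_x.
move: Hy; rewrite Eg /= (negbTE hxy) /= => Hy.
have [k Hk] := push_x_lift (e' + e) Hy; exists k.
rewrite ydiv_push_x ?ymass_push_x //; split => //.
rewrite state_word_cons -catA; apply: eqw_trans Hk; exact/eqw_catl/gpowD.
Qed.

Lemma symmod_y e : (2 * `|e| < q * t0)%N -> symmod y e = e.
Proof.
move=> He; apply: (symmod_small morder_gt0).
by rewrite /morder eq_sym (negbTE hxy); lia.
Qed.

Lemma push_y_lift e s : ydiv s -> (q%:Z %| e)%Z -> (2 * `|e| < q * t0)%N ->
  [/\ state_word (push y e s) = state_word s ++ gpow y e,
      ydiv (push y e s) & (ymass (push y e s) <= ymass s + `|e|)%N].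
Proof.
move=> Hs He Hb; rewrite state_word_push ?symmod_y // /push symmod_y //.
by case: eqP => _ /=; rewrite ?eqxx ?He ?Hs; split => //; lia.
Qed.

Lemma rmul_y_lift s e : reduced s -> ydiv s -> (q%:Z %| e)%Z ->
  (2 * (ymass s + `|e|) < q * t0)%N ->
  [/\ (state_word s ++ gpow y e) ~ state_word (rmul s (y, e)),
      ydiv (rmul s (y, e)) & (ymass (rmul s (y, e)) <= ymass s + `|e|)%N].
Proof.
move=> Hs Hy He Hb; have [Hh|] := boolP (head_not y s).
  have Hb' : (2 * `|e| < q * t0)%N by lia.
  rewrite rmul_head_not //; have [-> Hy' Hm] := push_y_lift Hy He Hb'.
  by split => //; apply: eqw_refl.
case: s Hs Hy Hb => [|[g' e'] s] //= Hs /andP [He' Hy] Hb /negPn /eqP Eg.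
subst g'; rewrite eqxx /= in He' Hb *.
have Hb' : (2 * absz (e' + e)%R < q * t0)%N by lia.
have [-> Hy' Hm] := push_y_lift Hy (rpredD He' He) Hb'.
split => //; last by apply: leq_trans Hm _; lia.
by rewrite state_word_cons -catA; apply/eqw_catl/gpowD.
Qed.

Definition unit_syl (z : syl) :=
  (z.1 == x) || [&& z.1 == y, (q%:Z %| z.2)%Z & (`|z.2| <= q)%N].

Lemma rmul_unit_lift s z : reduced s -> ydiv s -> unit_syl z ->
  (2 * (ymass s + q) < q * t0)%N -> exists k,
  [/\ (state_word s ++ gpow z.1 z.2) ~ (cpow k ++ state_word (rmul s z)),
      ydiv (rmul s z) & (ymass (rmul s z) <= ymass s + q)%N].
Proof.
case: z => g e Hs Hy /orP [/eqP /= ->|/and3P [/= /eqP -> He Heq]] Hb.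
  have [k [Hw Hy' Hm]] := rmul_x_lift e Hs Hy; exists k; split => //; lia.
have Hb' : (2 * (ymass s + `|e|) < q * t0)%N by lia.
have [Hw Hy' Hm] := rmul_y_lift Hs Hy He Hb'.
by exists 0; rewrite mulr0; split => //; lia.
Qed.

Lemma lift_units us s : reduced s -> ydiv s -> all unit_syl us ->
  (2 * (ymass s + q * size us) < q * t0)%N -> exists k,
  (state_word s ++ syl_word us) ~ (cpow k ++ state_word (foldl rmul s us))
  /\ ydiv (foldl rmul s us).
Proof.
elim: us s => [|z us IH] s Hs Hy /=.
  by move=> _ _; exists 0; rewrite mulr0 cats0; split => //; apply: eqw_refl.
case/andP=> Hz Hus Hb.
have Hb1 : (2 * (ymass s + q) < q * t0)%N by move: Hb; rewrite mulnS; lia.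
have [k1 [H1 Hy1 Hm1]] := rmul_unit_lift Hs Hy Hz Hb1.
have Hb2 : (2 * (ymass (rmul s z) + q * size us) < q * t0)%N.
  by move: Hb; rewrite mulnS; lia.
have [k2 [H2 Hy2]] := IH _ (reduced_rmul z Hs) Hy1 Hus Hb2.
exists (k1 + k2); split => //.
rewrite syl_word_cons catA; apply: eqw_trans (eqw_catr _ H1) _.
rewrite -catA; apply: eqw_trans (eqw_catl _ H2) _.
by rewrite catA mulrDr; apply/eqw_catr/gpowD.
Qed.

Lemma ydiv_strip s : ydiv s -> ydiv (strip y s).
Proof.
case: s => [|z s] //=; case E: (z.1 == y); first by case/andP.
by rewrite /= E.
Qed.

Lemma state_word_strip s : ydiv s ->
  exists2 a, (q%:Z %| a)%Z & state_word s = state_word (strip y s) ++ gpow y a.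
Proof.
case: s => [|[g e] s] /=; first by exists 0; rewrite ?dvdz0.
case/andP=> He _; case: eqP => [Eg|_]; last by exists 0; rewrite ?dvdz0 ?cats0.
by exists e; [move: He; rewrite Eg eqxx | rewrite state_word_cons Eg].
Qed.

Lemma syl_word_strip l : ydiv l ->
  exists2 a, (q%:Z %| a)%Z & syl_word l = gpow y a ++ syl_word (strip y l).
Proof.
case: l => [|[g e] l] /=; first by exists 0; rewrite ?dvdz0.
case/andP=> He _; case: eqP => [Eg|_]; last by exists 0; rewrite ?dvdz0.
by exists e; [move: He; rewrite Eg eqxx | rewrite Eg].
Qed.

Lemma state_word_dcore s : ydiv s -> exists a1 a2, [/\ (q%:Z %| a1)%Z, (q%:Z %| a2)%Z &
  state_word s = gpow y a2 ++ syl_word (dcore y s) ++ gpow y a1].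
Proof.
move=> Hs; have [a1 Ha1 ->] := state_word_strip Hs.
have Hr : ydiv (rev (strip y s)) by rewrite /ydiv all_rev; apply: ydiv_strip.
have [a2 Ha2 E] := syl_word_strip Hr.
by exists a1, a2; rewrite /state_word E catA.
Qed.

Lemma dcoset_shift c1 c2 a1 a2 b1 b2 w : (q%:Z %| a2 - b2)%Z ->
  ((cpow (c1 - c2) ++ gpow y (a2 - b2)) ++ (cpow c2 ++ gpow y b2 ++ w ++ gpow y b1)
    ++ gpow y (a1 - b1)) ~ (cpow c1 ++ gpow y a2 ++ w ++ gpow y a1).
Proof.
case/dvdzP=> j Hj; rewrite -!catA.
apply: (@eqw_trans _ _ (cpow (c1 - c2) ++ cpow c2 ++ gpow y (a2 - b2) ++ gpow y b2
    ++ w ++ gpow y b1 ++ gpow y (a1 - b1))).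
  apply: eqw_catl; rewrite !catA; do 4 apply: eqw_catr.
  by rewrite Hj mulrC; apply/eqw_sym/gpowM_comm.
have := eqw_cat (gpowD R x (p%:Z * (c1 - c2)) (p%:Z * c2))
  (eqw_cat (gpowD R y (a2 - b2) b2) (eqw_catl w (gpowD R y b1 (a1 - b1)))).
by rewrite -mulrDr !subrK [b1 + _]addrC subrK -!catA.
Qed.

Lemma lift_dcore usF usG : all unit_syl usF -> all unit_syl usG ->
  (2 * (q * size usF) < q * t0)%N -> (2 * (q * size usG) < q * t0)%N ->
  dcore y (foldl rmul [::] usF) = dcore y (foldl rmul [::] usG) ->
  exists c a b, [/\ (q%:Z %| a)%Z, (q%:Z %| b)%Z &
    syl_word usF ~ ((cpow c ++ gpow y a) ++ syl_word usG ++ gpow y b)].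
Proof.
move=> HF HG HbF HbG Hcore.
have [cF [EF YF]] := @lift_units usF [::] isT isT HF HbF.
have [cG [EG YG]] := @lift_units usG [::] isT isT HG HbG.
have [a1 [a2 [Ha1 Ha2 DF]]] := state_word_dcore YF.
have [b1 [b2 [Hb1 Hb2 DG]]] := state_word_dcore YG.
rewrite DF in EF; rewrite DG -Hcore in EG.
exists (cF - cG), (a2 - b2), (a1 - b1); split; rewrite ?rpredB //.
apply: eqw_sym; apply: eqw_trans (eqw_sym EF).
apply: eqw_trans (dcoset_shift _ _ _ _ _ (rpredB Ha2 Hb2)).
by apply: eqw_catl; apply: eqw_catr.
Qed.

End Lifting.

Lemma gen_word_cat gens u v : gen_word gens u -> gen_word gens v -> gen_word gens (u ++ v).
Proof.
move=> [l1 [H1 ->]] [l2 [H2 ->]]; exists (l1 ++ l2).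
by rewrite all_cat H1 H2 map_cat flatten_cat.
Qed.

Lemma gen_word_gpowM gens g (k : nat) (c : int) :
  gpow g k \in gens -> gen_word gens (gpow g (k%:Z * c)).
Proof.
move=> Hk; have [j [b ->]] := gpowM_flatten g k c.
exists (nseq j (index (gpow g k) gens, b)); split; first by rewrite all_nseq /= index_mem Hk orbT.
by rewrite map_nseq /= nth_index //; case: b; rewrite ?inv_word_nseq.
Qed.

Lemma gen_word_units (x y : gen) (p q : nat) (gens : seq word) (w : word) :
  {subset gens <= [:: [:: (x, false)]; gpow x p; gpow y q]} -> gen_word gens w ->
  exists2 us, all (unit_syl x y q) us & w = syl_word us.
Proof.
move=> Hgens [l [Hl ->]]; elim: l Hl => [|[i b] l IH] /=; first by exists [::].
case/andP=> Hi /IH [us Hus ->].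
have : nth [::] gens i \in [:: [:: (x, false)]; gpow x p; gpow y q] by apply/Hgens/mem_nth.
rewrite !inE => /or3P [] /eqP ->.
- exists ((x, if b then -1 else 1) :: us); first by rewrite /= /unit_syl eqxx Hus.
  by case: b.
- exists ((x, if b then - p%:Z else p%:Z) :: us); first by rewrite /= /unit_syl eqxx Hus.
  by case: b; rewrite /= ?inv_word_nseq -?gpowN_nat.
- exists ((y, if b then - q%:Z else q%:Z) :: us).
    rewrite /= /unit_syl /= eqxx Hus andbT.
    by case: b; rewrite ?rpredN dvdzz ?abszN leqnn orbT.
  by case: b; rewrite /= ?inv_word_nseq -?gpowN_nat.
Qed.

Lemma in_dcoset_lift R Hg (x y : gen) (p q : nat) f g c a b :
  gpow x p \in Hg -> gpow y q \in Hg -> (q%:Z %| a)%Z -> (q%:Z %| b)%Z ->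
  eqw R f ((gpow x (p%:Z * c) ++ gpow y a) ++ g ++ gpow y b) -> in_dcoset R Hg f g.
Proof.
move=> Hx Hy /dvdzP [j ->] /dvdzP [k ->]; rewrite ![_ * q%:Z]mulrC => E.
exists (gpow x (p%:Z * c) ++ gpow y (q%:Z * j)), (gpow y (q%:Z * k)).
split; first by apply: gen_word_cat; apply: gen_word_gpowM.
by split; first apply: gen_word_gpowM.
Qed.

Lemma dcoset_separation m n (x y : gen) (p q : nat) (S : seq word) (f g : word) :
  x != y -> (0 < p)%N -> (0 < q)%N ->
  eqw (rels m n) (gpow x p ++ gpow y q) (gpow y q ++ gpow x p) ->
  Hgens m n =i [:: gpow x p; gpow y q] ->
  {subset S <= [:: [:: (x, false)]; gpow x p; gpow y q]} ->
  (forall t0 t, (0 < t0)%N -> (t0 %| t)%N -> forall r, List.In r (rels_t m n t) ->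
     forall s, reduced (morder x p q t0) s -> run (morder x p q t0) s r = s) ->
  in_subgroup (rels m n) S f -> in_subgroup (rels m n) S g ->
  ~ in_dcoset (rels m n) (Hgens m n) f g ->
  exists t0 : nat, (1 < t0)%N /\
    forall t : nat, (0 < t)%N -> (t0 %| t)%N -> ~ in_dcoset (rels_t m n t) (Hgens m n) f g.
Proof.
move=> hxy hp hq hcomm hH hS hrel [wF [GF EF]] [wG [GG EG]] Hnot.
have [usF HuF Ef] := gen_word_units hS GF; have [usG HuG Eg] := gen_word_units hS GG.
subst wF wG; set t0 := (2 * (size usF + size usG) + 3)%N.
exists t0; split=> [|t ht Hdt [h1 [h2 [H1 [H2 He]]]]]; first by rewrite /t0; lia.
have ht0 : (0 < t0)%N by rewrite /t0; lia.
have to_t u v : eqw (rels m n) u v -> eqw (rels_t m n t) u v.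
  by apply: eqw_sub => r [<-|[]]; left.
have HeT : eqw (rels_t m n t) (syl_word usF) (h1 ++ syl_word usG ++ h2).
  apply: eqw_trans (to_t _ _ (eqw_sym EF)) _.
  by apply: eqw_trans He _; apply/eqw_ctx/to_t.
have Hgens_model w : w \in Hgens m n -> exists g' k, w = nseq k (g', false) /\
    (g' = y \/ (morder x p q t0 g' %| k%:Z)%Z).
  rewrite hH !inE => /orP [] /eqP ->; last by exists y, q; split; [|left].
  by exists x, p; split; [|right; rewrite /morder eqxx].
have morder_pos := morder_gt0 x hp hq ht0.
have Hcore := dcore_dcoset morder_pos Hgens_model (hrel _ _ ht0 Hdt) H1 H2 HeT.
rewrite !(run_syl_word morder_pos) // in Hcore.
have size_bound (us : seq syl) :
    (size us <= size usF + size usG)%N -> (2 * (q * size us) < q * t0)%N.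
  by move=> Hus; rewrite mulnCA ltn_pmul2l // /t0; lia.
have [c [a [b [Ha Hb E]]]] := lift_dcore hxy hp hq ht0 hcomm HuF HuG
  (size_bound usF (leq_addr _ _)) (size_bound usG (leq_addl _ _)) Hcore.
apply: Hnot; apply: (in_dcoset_lift (x := x) (y := y) (p := p) (c := c) _ _ Ha Hb).
- by rewrite hH mem_head.
- by rewrite hH !inE eqxx orbT.
apply: eqw_trans EF _; apply: eqw_trans E _.
by apply/eqw_ctx/eqw_sym.
Qed.

Local Close Scope ring_scope.

Lemma dcoset_separation_A m n f g : 0 < m -> 0 < n ->
  in_subgroup (rels m n) (Agens m n) f -> in_subgroup (rels m n) (Agens m n) g ->
  ~ in_dcoset (rels m n) (Hgens m n) f g ->
  exists t0 : nat, 1 < t0 /\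
    forall t : nat, 0 < t -> t0 %| t -> ~ in_dcoset (rels_t m n t) (Hgens m n) f g.
Proof.
move=> hm hn; apply: (@dcoset_separation _ _ ga gb m n) => //.
- by apply: eqw_comm_relator; left.
- move=> t0 t ht0 Hdt; apply: (run_rels_t (morder_gt0 _ hm hn ht0)).
  + by left; rewrite /morder eqxx dvdzz.
  + by rewrite /morder eqxx dvdzE /= dvdn_mulr.
  + by rewrite /morder /= dvdzE /= dvdn_pmul2l.
Qed.

Lemma dcoset_separation_B m n f g : 0 < m -> 0 < n ->
  in_subgroup (rels m n) (Bgens m n) f -> in_subgroup (rels m n) (Bgens m n) g ->
  ~ in_dcoset (rels m n) (Hgens m n) f g ->
  exists t0 : nat, 1 < t0 /\
    forall t : nat, 0 < t -> t0 %| t -> ~ in_dcoset (rels_t m n t) (Hgens m n) f g.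
Proof.
move=> hm hn; apply: (@dcoset_separation _ _ gb ga n m) => //.
- by apply/eqw_sym/eqw_comm_relator; left.
- by move=> w; rewrite !inE orbC.
- by move=> w; rewrite !inE => /or3P [] ->; rewrite ?orbT.
- move=> t0 t ht0 Hdt; apply: (run_rels_t (morder_gt0 _ hn hm ht0)).
  + by right; rewrite /morder eqxx dvdzz.
  + by rewrite /morder /= dvdzE /= dvdn_pmul2l.
  + by rewrite /morder eqxx dvdzE /= dvdn_mulr.
Qed.

Theorem proposition2p6 (m n : nat) (hm : 1 < m) (hn : 1 < n) (f g : word) :
  ((in_subgroup (rels m n) (Agens m n) f /\ in_subgroup (rels m n) (Agens m n) g)
   \/ (in_subgroup (rels m n) (Bgens m n) f /\ in_subgroup (rels m n) (Bgens m n) g)) ->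
  ~ in_dcoset (rels m n) (Hgens m n) f g ->
  exists t0 : nat, 1 < t0 /\
    forall t : nat, 0 < t -> t0 %| t ->
      ~ in_dcoset (rels_t m n t) (Hgens m n) f g.
Proof.
have hm0 : 0 < m by apply: ltnW.
have hn0 : 0 < n by apply: ltnW.
by case=> [[Hf Hg]|[Hf Hg]]; [apply: dcoset_separation_A | apply: dcoset_separation_B].
Qed.
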